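(* Let $G$ be a query graph and let $R,S\in E^i$ be coupled edges with $S\not\lesssim R$ (i.e. $u_R\notin u_S^+$). Then $G$ admits an $(R,S)$-valid labeling.
   Context: $G=G[Q]$ is the query graph of a Boolean CQ without self-joins with atoms $R(u,v)$, $u\ne v$, first attribute the key: vertices are variables, each atom gives an edge $e_R=(u_R,v_R)$, consistent/inconsistent according to the type of $R$; $E^i$ = inconsistent edges. Paths may have zero edges; $x\leadsto y$ is a directed path; undirected paths ignore directions; for a path $P$ and vertex set $N$, $P\cap N$ is the set of vertices of $P$ in $N$. $u^+=\{v:u\leadsto v\}$, $u^{+,R}=\{v:u\leadsto v$ in $G-\{e_R\}\}$. For $R,S\in E^i$: $R\lesssim S$ iff $u_S\in u_R^+$; $R\sim S$ iff $R\lesssim S$ and $S\lesssim R$; $[R]$ is the class of $R$; $coupled^+(R)=[R]\cup\{S\in E^i:\exists$ undirected path $P$ from $v_R$ to $u_S$ with $P\cap u_R^{+,R}=\emptyset\}$; $R,S$ are coupled if $R\in coupled^+(S)$ and $S\in coupled^+(R)$. Label lattice: $\mathcal L=\{\bot,\mathbb B,X,\Phi,X^*,\top\}$ ordered as the lattice generated by $\bot<\mathbb B<\Phi<\top$, $\mathbb B<X^*<\top$, $\bot<X<X^*$ (so $\bot$ is least, $\top$ greatest, $\Phi$ and $X$ incomparable, $\Phi$ and $X^*$ incomparable, $X$ and $\mathbb B$ incomparable; e.g. $\Phi\wedge X^*=\mathbb B$, $\Phi\wedge X=\bot$, $\mathbb B\vee X=X^*$). For $R,S\in E^i$, a labeling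 $L:V(G)\to\mathcal L$ is $(R,S)$-valid if: (1) $L(u_R)=\Phi$ and $L(v_R)\in\{\top,X,X^*\}$; (2) $L(u_S)=X$ and $L(v_S)\in\{\mathbb B,X^*\}$; (3) for every edge $T\in E^i\setminus\{R,S\}$, $L(u_T)\ge L(v_T)$; (4) there is an undirected path $P_R$ from $v_R$ to $u_S$ with $L(w)\ge X$ for every vertex $w$ of $P_R$; (5) there is an undirected path $P_S$ from $v_S$ to $u_R$ with $L(w)\ge\mathbb B$ for every vertex $w$ of $P_S$. *)

From mathcomp Require Import all_boot.
Set Implicit Arguments. Unset Strict Implicit. Unset Printing Implicit Defensive.

(* A query graph of a Boolean self-join-free CQ with binary atoms R(u,v),
   u <> v, first attribute the key.  Vertices = variables, edges = atoms
   (a multigraph: distinct atoms may share endpoints).  [qincons e] says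
   the atom (relation) of edge e is of inconsistent type. *)
Record qgraph := QGraph {
  qV : finType;
  qE : finType;
  qsrc : qE -> qV;              (* u_R : key attribute *)
  qtgt : qE -> qV;
  qincons : pred qE;
  qsrc_neq_tgt : forall e, qsrc e != qtgt e
}.

Section QG.
Variable G : qgraph.
Local Notation V := (qV G).
Local Notation E := (qE G).

Definition dstep (A : pred E) : rel V :=
  fun x y => [exists e, [&& A e, qsrc e == x & qtgt e == y]].

Definition dreach (A : pred E) (x y : V) : Prop :=
  exists p : seq V, path (dstep A) x p /\ last x p = y.

Definition plus (u v : V) : Prop := dreach predT u v.
Definition plusR (R : E) (u v : V) : Prop :=
  dreach (fun e => e != R) u v.

Definition uadj : rel V :=
  fun x y => [exists e, ((qsrc e == x) && (qtgt e == y))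
                     || ((qsrc e == y) && (qtgt e == x))].

Definition upath_in (P : V -> Prop) (x y : V) : Prop :=
  exists p : seq V, [/\ path uadj x p, last x p = y &
                        forall w, w \in x :: p -> P w].

Definition lesssim (R S : E) : Prop := plus (qsrc R) (qsrc S).
Definition simeq (R S : E) : Prop := lesssim R S /\ lesssim S R.

Definition in_coupled_plus (R S : E) : Prop :=
  qincons S /\
  (simeq R S \/
   upath_in (fun w => ~ plusR R (qsrc R) w) (qtgt R) (qsrc S)).

Definition coupled (R S : E) : Prop :=
  in_coupled_plus S R /\ in_coupled_plus R S.

End QG.

Inductive label := LBot | LB | LX | LPhi | LXs | LTop.

(* order generated by bot<B<Phi<top, B<X*<top, bot<X<X* *)
Definition leL (a b : label) : bool :=
  match a, b with
  | LBot, _ => true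
  | _, LTop => true
  | LB, (LB | LPhi | LXs) => true
  | LX, (LX | LXs) => true
  | LPhi, LPhi => true
  | LXs, LXs => true
  | _, _ => false
  end.

Section Valid.
Variable G : qgraph.
Local Notation V := (qV G).
Local Notation E := (qE G).

Definition valid_labeling (R S : E) (L : V -> label) : Prop :=
  [/\ L (qsrc R) = LPhi /\ (L (qtgt R) = LTop \/ L (qtgt R) = LX \/ L (qtgt R) = LXs),
      L (qsrc S) = LX /\ (L (qtgt S) = LB \/ L (qtgt S) = LXs),
      (forall T : E, qincons T -> T != R -> T != S ->
          leL (L (qtgt T)) (L (qsrc T))),
      upath_in (fun w => leL LX (L w)) (qtgt R) (qsrc S)
    & upath_in (fun w => leL LB (L w)) (qtgt S) (qsrc R)].
End Valid.

From mathcomp Require Import all_boot.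
From Stdlib Require Import ClassicalEpsilon.

(* Proof of Proposition 6.2.  Write A = u_R^{+,R}, B = u_S^{+,S} and let C be
   the set of vertices from which u_R is reachable.  Every vertex w gets the
   label [encode (w \in B) (w \in C) (w \in A)], where [encode] sends
      B ↦ X (or ⊥ if also in A),   C \ B ↦ ⊤ (or Φ if in A),
      otherwise ↦ X* (or 𝔹 if in A).
   The encoding is antitone in the B- and A-coordinates and monotone in the
   C-coordinate; A and B are closed forward along every edge other than R, S,
   and C is closed backward along every edge, so condition (3) holds.
   Coupling together with S ≴ R yields an undirected path v_R — u_S avoiding A
   and an undirected path v_S — u_R avoiding B; labels outside A are ≥ X and
   labels outside B are ≥ 𝔹, which gives conditions (4) and (5).  The endpoint
   conditions (1), (2) follow from the endpoints of these paths, together with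
   v_S ∉ C (otherwise u_S would reach u_R, i.e. S ≲ R). *)

Section Reachability.
Context {G : qgraph}.
Implicit Types (A : pred (qE G)) (e : qE G) (x y z : qV G).

Lemma dreach_refl A x : dreach A x x.
Proof. by exists [::]. Qed.

Lemma dreach_snoc A x e :
  dreach A x (qsrc e) -> A e -> dreach A x (qtgt e).
Proof.
move=> [p [p_path p_last]] Ae; exists (rcons p (qtgt e)); split.
  rewrite rcons_path p_path p_last /=; apply/existsP; exists e.
  by rewrite Ae !eqxx.
by rewrite last_rcons.
Qed.

Lemma dreach_cons A e z :
  dreach A (qtgt e) z -> A e -> dreach A (qsrc e) z.
Proof.
move=> [p [p_path p_last]] Ae; exists (qtgt e :: p); split => //=.
rewrite p_path andbT; apply/existsP; exists e.
by rewrite Ae !eqxx.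
Qed.

Lemma upath_mono {P Q : qV G -> Prop} {x y} :
  (forall w, P w -> Q w) -> upath_in P x y -> upath_in Q x y.
Proof. by move=> PQ [p [p_path p_last p_in]]; exists p; split=> // w /p_in/PQ. Qed.

Lemma upath_ends {P : qV G -> Prop} {x y} : upath_in P x y -> P x /\ P y.
Proof.
move=> [p [_ p_last p_in]]; split; first by apply: p_in; rewrite inE eqxx.
by rewrite -p_last; apply: p_in; exact: mem_last.
Qed.

End Reachability.

Definition encode (inB inC inA : bool) : label :=
  if inB then (if inA then LBot else LX)
  else if inC then (if inA then LPhi else LTop)
  else (if inA then LB else LXs).

(* [encode] is antitone in its first and third argument, monotone in its
   second: this turns the closure properties of A, B, C into condition (3). *)
Lemma encode_mono (bu cu au bv cv av : bool) :
  (bu -> bv) -> (cv -> cu) -> (au -> av) ->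
  leL (encode bv cv av) (encode bu cu au).
Proof.
by case: bu; case: cu; case: au; case: bv; case: cv; case: av => //= H1 H2 H3;
  (have := H1 isT) || (have := H2 isT) || (have := H3 isT).
Qed.

Lemma encode_outA_geX (inB inC : bool) : leL LX (encode inB inC false).
Proof. by case: inB; case: inC. Qed.

Lemma encode_outB_geB (inC inA : bool) : leL LB (encode false inC inA).
Proof. by case: inC; case: inA. Qed.

Definition decide (P : Prop) : bool :=
  if excluded_middle_informative P then true else false.

Lemma decideT (P : Prop) : P -> decide P = true.
Proof. by rewrite /decide; case: excluded_middle_informative. Qed.

Lemma decideF (P : Prop) : ~ P -> decide P = false.
Proof. by rewrite /decide; case: excluded_middle_informative. Qed.

Lemma decideP (P : Prop) : decide P = true -> P.
Proof. by rewrite /decide; case: excluded_middle_informative. Qed.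

Section Labeling.
Context {G : qgraph} (R S : qE G).

(* When S ≴ R, S cannot lie in the class of R, so S ∈ coupled^+(R) must be
   witnessed by an undirected path v_R — u_S avoiding u_R^{+,R}. *)
Lemma coupled_plus_path :
  ~ lesssim S R -> in_coupled_plus R S ->
  upath_in (fun w => ~ plusR R (qsrc R) w) (qtgt R) (qsrc S).
Proof. by move=> nSR [_ [[_ SR] | //]]. Qed.

Lemma coupled_plus_path_sym :
  ~ lesssim S R -> in_coupled_plus S R ->
  upath_in (fun w => ~ plusR S (qsrc S) w) (qtgt S) (qsrc R).
Proof. by move=> nSR [_ [[SR _] | //]]. Qed.

Definition inA (w : qV G) : bool := decide (plusR R (qsrc R) w).
Definition inB (w : qV G) : bool := decide (plusR S (qsrc S) w).
Definition inC (w : qV G) : bool := decide (plus w (qsrc R)).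

Definition labeling (w : qV G) : label := encode (inB w) (inC w) (inA w).

Lemma labeling_edge (T : qE G) :
  T != R -> T != S -> leL (labeling (qtgt T)) (labeling (qsrc T)).
Proof.
move=> TR TS; apply: encode_mono => /decideP reach; apply: decideT.
- exact: dreach_snoc reach TS.
- exact: dreach_cons reach isT.
- exact: dreach_snoc reach TR.
Qed.

Lemma labeling_outA (w : qV G) :
  ~ plusR R (qsrc R) w -> leL LX (labeling w).
Proof. by move=> /decideF wA; rewrite /labeling /inA wA encode_outA_geX. Qed.

Lemma labeling_outB (w : qV G) :
  ~ plusR S (qsrc S) w -> leL LB (labeling w).
Proof. by move=> /decideF wB; rewrite /labeling /inB wB encode_outB_geB. Qed.

End Labeling.

Theorem proposition6p2 (G : qgraph) (R S : qE G) :
  qincons R -> qincons S ->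
  coupled R S ->
  ~ lesssim S R ->
  exists L : qV G -> label, valid_labeling R S L.
Proof.
move=> _ _ [cplR cplS] nSR.
have pathR := coupled_plus_path _ _ nSR cplS.
have pathS := coupled_plus_path_sym _ _ nSR cplR.
have [/decideF vR_A /decideF uS_A] := upath_ends pathR.
have [/decideF vS_B /decideF uR_B] := upath_ends pathS.
have uR_A : inA R (qsrc R) = true by apply/decideT/dreach_refl.
have uS_B : inB S (qsrc S) = true by apply/decideT/dreach_refl.
have uR_C : inC R (qsrc R) = true by apply/decideT/dreach_refl.
have vS_C : inC R (qtgt S) = false.
  by apply/decideF => reach; apply: nSR; exact: dreach_cons reach isT.
exists (labeling R S); split; rewrite /labeling.
- rewrite uR_A uR_C [inB _ _]uR_B [inA _ _]vR_A; split=> //.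
  by case: (inB _ _); case: (inC _ _); auto.
- rewrite uS_B [inA _ _]uS_A [inB _ _]vS_B vS_C; split=> //.
  by case: (inA _ _); auto.
- by move=> T _; exact: labeling_edge.
- exact: upath_mono (@labeling_outA _ R S) pathR.
- exact: upath_mono (@labeling_outB _ R S) pathS.
Qed.
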